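(* Run the cluster decoder (exponential-growth version) on a layer code with an input Pauli-$X$ error $P$ supported on a set $B$ of qubits, and let $C_t$ denote the correction accumulated up to time $t$. Then $P\cdot C_t$ is supported within $\mathrm{Ball}(B,4^t+1)$.
   Context: Layer code: the Williamson–Baspin 3D code built from surface-code layers coupled along line defects. Decoding hypergraph $G$: one vertex per $Z$-check, one hyperedge per qubit containing the $Z$-checks acting on it. The graph metric $d_G$ on qubits is the distance in the dual hypergraph (two qubits adjacent when they share a $Z$-check); $\mathrm{Ball}(x,r)$ is the set of qubits at $d_G$-distance at most $r$ from $x$, and $\mathrm{Ball}(S,r)=\bigcup_{x\in S}\mathrm{Ball}(x,r)$. Cluster decoder: start with one single-vertex active cluster per excited vertex (violated $Z$-check); at steps $t=0,1,\dots$ grow each active cluster to graph radius $4^t$, merge overlapping active clusters, and for each active cluster $T$ that is correctable (some set of hyperedges contained in $T$ meets each excited vertex of $T$ an odd number of times and every other vertex of $T$ an even number of times) apply such a set of qubit flips and deactivate $T$; stop when no active clusters remain. *)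

(* Decoding hypergraph: V = Z-checks (vertices), Q = qubits
   (hyperedges); inc v q  <=>  Z-check v acts on qubit q. *)
From mathcomp Require Import all_boot.
Set Implicit Arguments. Unset Strict Implicit. Unset Printing Implicit Defensive.

Section Defs.
Variables (V Q : finType) (inc : V -> Q -> bool).

(* symmetric difference = support of the product of two Pauli-X operators *)
Definition symd (T : finType) (A B : {set T}) : {set T} := (A :\: B) :|: (B :\: A).

Definition syndrome (E : {set Q}) : {set V} :=
  [set v | odd #|[set q in E | inc v q]|].

Definition qadj (q q' : Q) : bool := [exists v, inc v q && inc v q'].

Definition qball (S : {set Q}) (r : nat) : {set Q} :=
  iter r (fun A => A :|: [set q | [exists q' in A, qadj q' q]]) S.

Definition vadj (u w : V) : bool := [exists q, inc u q && inc w q].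

Definition vball (S : {set V}) (r : nat) : {set V} :=
  iter r (fun A => A :|: [set w | [exists u in A, vadj u w]]) S.

Definition contained (T : {set V}) : {set Q} :=
  [set q | [forall v, inc v q ==> (v \in T)]].

Definition is_correction (T s : {set V}) (F : {set Q}) : bool :=
  (F \subset contained T) &&
  [forall v in T, odd #|[set q in F | inc v q]| == (v \in s)].

Definition correctable (T s : {set V}) : bool :=
  [exists F : {set Q}, is_correction T s F].

Definition overlap (r : nat) (u w : V) : bool :=
  [exists x, (x \in vball [set u] r) && (x \in vball [set w] r)].

Definition cluster_seeds (A : {set V}) (r : nat) (u : V) : {set V} :=
  [set w | connect (fun a b => [&& a \in A, b \in A & overlap r a b]) u w].

(* the merged active clusters at radius r, given by their seed sets K;
   the cluster region is vball K r *)
Definition clusters (A : {set V}) (r : nat) : {set {set V}} :=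
  [set cluster_seeds A r u | u in A].

Definition deact (A : {set V}) (r : nat) (s : {set V}) : {set {set V}} :=
  [set K in clusters A r | correctable (vball K r) (s :&: vball K r)].

(* A valid run of the exponential-growth cluster decoder on X-error P.
   A t = active seeds (excited vertices of active clusters) at the start of step t,
   D t = correction accumulated before step t (so D t.+1 = C_t, the correction
   accumulated up to and including step t). At step t active clusters are grown
   to radius 4^t, merged, and each correctable one is corrected by an arbitrary
   valid correction F K and deactivated. *)
Definition valid_run (P : {set Q}) (A : nat -> {set V}) (D : nat -> {set Q}) : Prop :=
  A 0 = syndrome P /\ D 0 = set0 /\
  forall t, exists F : {set V} -> {set Q},
    let s := syndrome (symd P (D t)) in
    let Dk := deact (A t) (4 ^ t) s in
    (forall K, K \in Dk -> is_correction (vball K (4 ^ t)) (s :&: vball K (4 ^ t)) (F K)) /\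
    A t.+1 = A t :\: \bigcup_(K in Dk) K /\
    D t.+1 = symd (D t) [set q | odd #|[set K in Dk | q \in F K]|].

End Defs.

From mathcomp Require Import all_boot.

(* A qubit flipped at step t lies in a hyperedge contained in a cluster
   Ball(K, 4^t), where every seed of K is a check excited by P and hence
   touches a qubit of P; so that qubit lies within distance 4^t + 1 of P.
   Corrections of earlier steps lie in smaller balls, and P itself lies in B. *)

Set Implicit Arguments.
Unset Strict Implicit.
Unset Printing Implicit Defensive.

Lemma symd_sub (T : finType) (X Y Z : {set T}) :
  X \subset Z -> Y \subset Z -> symd X Y \subset Z.
Proof.
move=> sXZ sYZ; rewrite /symd subUset.
by rewrite (subset_trans (subsetDl _ _) sXZ) (subset_trans (subsetDl _ _) sYZ).
Qed.

Lemma odd_count_sub_bigcup (I T : finType) (J : {set I}) (F : I -> {set T}) :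
  [set x | odd #|[set i in J | x \in F i]|] \subset \bigcup_(i in J) F i.
Proof.
apply/subsetP => x; rewrite inE => /odd_gt0/card_gt0P[i].
by rewrite inE => /andP[iJ xFi]; apply/bigcupP; exists i.
Qed.

Section Balls.
Variables (V Q : finType) (inc : V -> Q -> bool).

Lemma qball_subSn (S : {set Q}) k : qball inc S k \subset qball inc S k.+1.
Proof. exact: subsetUl. Qed.

Lemma qball_leq (S : {set Q}) k k' : k <= k' -> qball inc S k \subset qball inc S k'.
Proof.
move/subnK <-; elim: (k' - k) => [|n IH]; first by rewrite add0n.
exact: subset_trans IH (qball_subSn _ _).
Qed.

Lemma sub_qball (S : {set Q}) k : S \subset qball inc S k.
Proof. exact: qball_leq (leq0n k). Qed.

Lemma qballS (S S' : {set Q}) k :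
  S \subset S' -> qball inc S k \subset qball inc S' k.
Proof.
move=> sSS'; elim: k => [|k IH] //; apply/subsetP => q; rewrite /= !inE.
case/orP => [qS|/existsP[q' /andP[q'S adj]]]; first by rewrite (subsetP IH).
by apply/orP; right; apply/existsP; exists q'; rewrite (subsetP IH).
Qed.

Lemma incident_vball_qball (S : {set V}) (X : {set Q}) k v q :
  (forall u, u \in S -> exists2 p, p \in X & inc u p) ->
  v \in vball inc S k -> inc v q -> q \in qball inc X k.+1.
Proof.
move=> touchX; elim: k v q => [|k IH] v q.
  move=> /touchX[p pX vp] vq; rewrite /= !inE; apply/orP; right.
  by apply/existsP; exists p; rewrite pX; apply/existsP; exists v; rewrite vp.
rewrite /= inE => /orP[vk vq|]; first exact: subsetP (qball_subSn _ _) _ (IH v q vk vq).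
rewrite inE => /existsP[u /andP[uk /existsP[p /andP[up vp]]]] vq.
rewrite /= !inE; apply/orP; right; apply/existsP; exists p.
by rewrite (IH u p uk up); apply/existsP; exists v; rewrite vp.
Qed.

Hypothesis covered : forall q : Q, exists v : V, inc v q.

Lemma contained_vball_qball (S : {set V}) (X : {set Q}) k :
  (forall u, u \in S -> exists2 p, p \in X & inc u p) ->
  contained inc (vball inc S k) \subset qball inc X k.+1.
Proof.
move=> touchX; apply/subsetP => q; rewrite inE => /forallP qin.
have [v vq] := covered q.
exact: incident_vball_qball touchX (implyP (qin v) vq) vq.
Qed.

End Balls.

Lemma syndrome_touches (V Q : finType) (inc : V -> Q -> bool) (E : {set Q}) u :
  u \in syndrome inc E -> exists2 p, p \in E & inc u p.
Proof.
rewrite inE => /odd_gt0/card_gt0P[p].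
by rewrite inE => /andP[pE up]; exists p.
Qed.

Lemma clusters_sub (V Q : finType) (inc : V -> Q -> bool) (A : {set V}) r K :
  K \in clusters inc A r -> K \subset A.
Proof.
case/imsetP => u uA ->; apply/subsetP => w; rewrite inE => /connectP[p path_p ->].
elim: p u uA path_p => [|x p IH] u uA //= /andP[/and3P[_ xA _] path_p].
exact: IH xA path_p.
Qed.

Section Run.
Variables (V Q : finType) (inc : V -> Q -> bool).
Hypothesis covered : forall q : Q, exists v : V, inc v q.
Variables (P : {set Q}) (A : nat -> {set V}) (D : nat -> {set Q}).
Hypothesis run : valid_run inc P A D.

Lemma active_sub_syndrome s : A s \subset syndrome inc P.
Proof.
case: run => A0 [_ step]; elim: s => [|s IH]; first by rewrite A0.
have [F /= [_ [-> _]]] := step s.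
exact: subset_trans (subsetDl _ _) IH.
Qed.

Lemma run_step_in_qball s :
  exists2 X : {set Q}, X \subset qball inc P (4 ^ s + 1) & D s.+1 = symd (D s) X.
Proof.
case: run => _ [_ step]; have [F /= [corr [_ ->]]] := step s.
eexists; last by [].
apply/(subset_trans (odd_count_sub_bigcup _ F))/bigcupsP => K Kdeact.
have /andP[FK _] := corr K Kdeact.
apply: subset_trans FK _; rewrite addn1; apply: contained_vball_qball => // u uK.
apply/syndrome_touches/(subsetP (active_sub_syndrome s)).
by move: Kdeact; rewrite inE => /andP[/clusters_sub/subsetP->].
Qed.

Lemma correction_in_qball s : D s.+1 \subset qball inc P (4 ^ s + 1).
Proof.
have [_ [D0 _]] := run.
elim: s => [|s IH].
  by have [X sX ->] := run_step_in_qball 0; rewrite D0 symd_sub ?sub0set.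
have [X sX ->] := run_step_in_qball s.+1; apply: symd_sub sX.
by apply: subset_trans IH (qball_leq _ _ _); rewrite leq_add2r leq_exp2l.
Qed.

End Run.

Theorem lemma8 (V Q : finType) (inc : V -> Q -> bool)
  (hcov : forall q : Q, exists v : V, inc v q)
  (B P : {set Q}) (A : nat -> {set V}) (D : nat -> {set Q}) (t : nat) :
  P \subset B -> valid_run inc P A D ->
  symd P (D t.+1) \subset qball inc B (4 ^ t + 1).
Proof.
move=> sPB run; apply: symd_sub; first exact: subset_trans sPB (sub_qball _ _ _).
exact: subset_trans (correction_in_qball hcov run t) (qballS _ _ sPB).
Qed.
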